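(* Let $S=K[x_1,\dots,x_n]$, let $I\subset S$ be an ideal generated by monomials of degree $\le d$, $R=S/I$, and let $c\ge1$ be an integer with $c\ge d-1$. Let $X$ be the set of residue classes in $R$ of the monomials of degree $c$ not in $I$ (a basis of $(R^{(c)})_1$) and $\mathcal F=\{(Y):Y\subseteq X\}$, a Koszul filtration of $R^{(c)}$. Then for every $u=0,\dots,c-1$ the Veronese module $V_u=\bigoplus_jR_{u+jc}$ has linear quotients with respect to $\mathcal F$ (in particular $V_u$ has a linear resolution over $R^{(c)}$).
   Context: $R^{(c)}=\bigoplus_jR_{jc}$ is standard graded with $R_{jc}$ in degree $j$, and $V_u$ is the graded $R^{(c)}$-module with degree-$j$ component $R_{u+jc}$. A Koszul filtration of a standard graded algebra $A$ is a set $\mathcal F$ of ideals such that: (i) each $I\in\mathcal F$ is generated in degree $1$; (ii) $0,\mathfrak m_A\in\mathcal F$; (iii) for every $I\in\mathcal F$, $I\ne0$, there is $J\in\mathcal F$ with $J\subset I$, $I/J$ cyclic and $J:I\in\mathcal F$. A module $M$ has linear quotients with respect to $\mathcal F$ if it is minimally generated by homogeneous $m_1,\dots,m_v$ with $\langle m_1,\dots,m_{i-1}\rangle:_Am_i\in\mathcal F$ for all $i$. A module generated in a single degree $e$ has a linear resolution if its regularity $\sup_i\{t_i^A(M)-i\}$ equals $e$, where $t_i^A(M)=\sup\{j:\operatorname{Tor}_i^A(M,K)_j\neq0\}$. *)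

(* Concrete model of S = K[x_1..x_n]: polynomials are
   finitely supported functions from exponent vectors (monomials) to K,
   multiplied by convolution. R = S/I is handled via representatives in S
   modulo the monomial ideal I generated by a list G of monomials. *)
From HB Require Import structures.
From mathcomp Require Import all_boot all_order all_algebra.
Set Implicit Arguments. Unset Strict Implicit. Unset Printing Implicit Defensive.
Import Order.TTheory GRing.Theory.
Local Open Scope ring_scope.

Section Monomial.
Variables (K : fieldType) (n : nat).

Definition mon := {ffun 'I_n -> nat}.
Definition mdeg (m : mon) : nat := (\sum_(i < n) m i)%N.

Definition ser := mon -> K.
Definition is_poly (f : ser) : Prop :=
  exists N : nat, forall m : mon, (N < mdeg m)%N -> f m = 0.

Definition xmon (a : mon) : ser := fun m => (m == a)%:R.

(* product in S (convolution over the divisors of m) *)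
Definition smul (f g : ser) : ser := fun m =>
  \sum_(a : {ffun 'I_n -> 'I_(mdeg m).+1} | [forall i, (a i <= m i)%N])
     f [ffun i => nat_of_ord (a i)] * g [ffun i => (m i - a i)%N].

Definition ssub (f g : ser) : ser := fun m => f m - g m.

Definition lincomb (r : nat -> ser) (gs : seq ser) : ser := fun m =>
  \sum_(k < size gs) smul (r k) (nth (fun _ => 0) gs k) m.

Definition in_mideal (G : seq mon) (f : ser) : Prop :=
  exists r : nat -> ser, (forall k, is_poly (r k)) /\ f =1 lincomb r (map xmon G).

(* f = g in R = S/I *)
Definition congI (G : seq mon) (f g : ser) : Prop := in_mideal G (ssub f g).

Definition homog (f : ser) (e : nat) : Prop := forall m, mdeg m <> e -> f m = 0.

(* representatives of elements of V_u = (+)_j R_{u+jc}; for u = 0 this is R^(c) *)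
Definition in_veronese (c u : nat) (f : ser) : Prop :=
  is_poly f /\ forall m, (mdeg m %% c)%N <> u -> f m = 0.

(* f lies in the R^(c)-submodule (of R) generated by gs *)
Definition gen_sub (G : seq mon) (c : nat) (gs : seq ser) (f : ser) : Prop :=
  exists r : nat -> ser, (forall k, in_veronese c 0 (r k)) /\ congI G f (lincomb r gs).

(* colon ideal  <gs> :_{R^(c)} g  (as a predicate on representatives) *)
Definition colon (G : seq mon) (c : nat) (gs : seq ser) (g : ser) (r : ser) : Prop :=
  in_veronese c 0 r /\ gen_sub G c gs (smul r g).

(* the ideal (Y) of R^(c) generated by the residue classes of monomials in Y *)
Definition ideal_gen (G : seq mon) (c : nat) (Y : seq mon) (r : ser) : Prop :=
  in_veronese c 0 r /\ gen_sub G c (map xmon Y) r.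

(* A (an ideal of R^(c)) belongs to F = {(Y) : Y subset of X}, where X is the
   set of classes of monomials of degree c not in I *)
Definition in_filtration (G : seq mon) (c : nat) (A : ser -> Prop) : Prop :=
  exists Y : seq mon,
    (forall y, y \in Y -> mdeg y = c /\ ~ in_mideal G (xmon y)) /\
    (forall r, in_veronese c 0 r -> (A r <-> ideal_gen G c Y r)).

(* gs is a minimal system of homogeneous generators of V_u over R^(c) *)
Definition min_gens (G : seq mon) (c u : nat) (gs : seq ser) : Prop :=
  [/\ forall k, (k < size gs)%N ->
        exists j : nat, is_poly (nth (fun _ => 0) gs k) /\
                        homog (nth (fun _ => 0) gs k) (u + j * c),
      forall f, in_veronese c u f -> gen_sub G c gs f &
      forall i, (i < size gs)%N ->
        ~ gen_sub G c (take i gs ++ drop i.+1 gs) (nth (fun _ => 0) gs i)].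

Definition veronese_linear_quotients (G : seq mon) (c u : nat) : Prop :=
  exists gs : seq ser, min_gens G c u gs /\
    forall i, (i < size gs)%N ->
      in_filtration G c (colon G c (take i gs) (nth (fun _ => 0) gs i)).

End Monomial.

From HB Require Import structures.
From mathcomp Require Import all_boot all_order all_algebra zify.
Set Implicit Arguments. Unset Strict Implicit. Unset Printing Implicit Defensive.
Import GRing.Theory.
Local Open Scope ring_scope.

(* Everything is monomial, so the argument is combinatorics of exponent
   vectors.  After some arithmetic of the divisibility order on monomials,
   we characterise coefficientwise (1) membership in the monomial ideal I
   and (2) membership in the R^(c)-submodule generated by monomials: f lies
   in it iff every monomial m of the support of f outside I is divisible by
   a generator x with deg(m/x) divisible by c.
   V_u is then minimally generated by the monomials of degree u outside I,
   listed in any order x_1, x_2, ....  Writing J for the monomial ideal of S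
   generated by I and x_1, ..., x_(i-1), the colon ideal (x_1..x_(i-1)) : x_i
   is generated by the degree-c monomials y outside I with y x_i in J.  The
   hypothesis c >= d - 1 is used exactly once: whenever a x_i lies in J, some
   divisor z of a of degree <= c already has z x_i in J, and z extends inside
   a to such a degree-c monomial y. *)

Section MonomialArithmetic.
Variable n : nat.
Implicit Types a b g h m x y z : mon n.

Definition mdvd a b : bool := [forall i, (a i <= b i)%N].
Definition mmul a b : mon n := [ffun i => (a i + b i)%N].
Definition mquo m b : mon n := [ffun i => (m i - b i)%N].
Definition mone : mon n := [ffun => 0%N].

Definition in_monideal (G : seq (mon n)) m : bool := has (mdvd^~ m) G.

Lemma mdvdP a b : reflect (forall i, (a i <= b i)%N) (mdvd a b).
Proof. exact: forallP. Qed.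

Lemma mdvd_refl a : mdvd a a.
Proof. by apply/mdvdP. Qed.

Lemma mdvd_trans a b m : mdvd a b -> mdvd b m -> mdvd a m.
Proof. by move=> /mdvdP ab /mdvdP bm; apply/mdvdP => i; exact: leq_trans (ab i) (bm i). Qed.

Lemma mone_dvd a : mdvd mone a.
Proof. by apply/mdvdP => i; rewrite ffunE. Qed.

Lemma mquo_dvd m b : mdvd (mquo m b) m.
Proof. by apply/mdvdP => i; rewrite ffunE leq_subr. Qed.

Lemma mmul_dvdl a g : mdvd g (mmul a g).
Proof. by apply/mdvdP => i; rewrite ffunE leq_addl. Qed.

Lemma mmul_dvd2r a b g : mdvd a b -> mdvd (mmul a g) (mmul b g).
Proof. by move=> /mdvdP ab; apply/mdvdP => i; rewrite !ffunE leq_add2r. Qed.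

Lemma mdvd_quo_mul a g h : mdvd (mquo h g) a = mdvd h (mmul a g).
Proof. by apply/mdvdP/mdvdP => H i; move: (H i); rewrite !ffunE leq_subLR addnC. Qed.

Lemma mdvd_mul_quo g m y : mdvd g m -> mdvd y (mquo m g) = mdvd (mmul y g) m.
Proof.
move=> /mdvdP gm; apply/mdvdP/mdvdP => H i; move: (H i) (gm i); rewrite !ffunE; lia.
Qed.

Lemma mquoK m b : mdvd b m -> mmul (mquo m b) b = m.
Proof. by move=> /mdvdP bm; apply/ffunP => i; rewrite !ffunE subnK. Qed.

Lemma mmulK a b : mquo (mmul a b) b = a.
Proof. by apply/ffunP => i; rewrite !ffunE addnK. Qed.

Lemma mdeg_coord m i : (m i <= mdeg m)%N.
Proof. by rewrite /mdeg (bigD1 i) //= leq_addr. Qed.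

Lemma mdeg_mmul a b : mdeg (mmul a b) = (mdeg a + mdeg b)%N.
Proof. by rewrite /mdeg -big_split; apply: eq_bigr => i _; rewrite ffunE. Qed.

Lemma mdeg_mquo m b : mdvd b m -> mdeg (mquo m b) = (mdeg m - mdeg b)%N.
Proof. by move/mquoK/(congr1 (@mdeg n)); rewrite mdeg_mmul => <-; rewrite addnK. Qed.

Lemma mdeg_mone : mdeg mone = 0%N.
Proof. by rewrite /mdeg big1 // => i _; rewrite ffunE. Qed.

Lemma mdvd_mdeg a b : mdvd a b -> (mdeg a <= mdeg b)%N.
Proof. by move/mdvdP => ab; apply: leq_sum => i _. Qed.

Lemma mdeg_eq0 a : mdeg a = 0%N -> a = mone.
Proof.
by move=> a0; apply/ffunP => i; rewrite ffunE; apply/eqP; rewrite -leqn0 -a0 mdeg_coord.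
Qed.

Lemma mdvd_mdeg_eq a b : mdvd a b -> mdeg a = mdeg b -> a = b.
Proof.
move=> ab eq_deg; have := mdeg_mquo ab; rewrite eq_deg subnn => /mdeg_eq0 /ffunP q0.
apply/ffunP => i; move/mdvdP: ab => /(_ i) ab; move: (q0 i); rewrite !ffunE => /eqP.
by rewrite subn_eq0 => ba; apply/eqP; rewrite eqn_leq ab ba.
Qed.

Lemma in_monideal_dvd G a b : mdvd a b -> in_monideal G a -> in_monideal G b.
Proof. by move=> ab /hasP [h hG ha]; apply/hasP; exists h => //; exact: mdvd_trans ab. Qed.

Definition mvar i : mon n := [ffun j => nat_of_bool (j == i)].

Lemma mdeg_mvar i : mdeg (mvar i) = 1%N.
Proof.
rewrite /mdeg (bigD1 i) //= ffunE eqxx big1 // => j /negbTE ji.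
by rewrite ffunE ji.
Qed.

Lemma mdvd_intermediate k z a : mdvd z a -> (mdeg z + k <= mdeg a)%N ->
  exists y, [/\ mdvd z y, mdvd y a & mdeg y = (mdeg z + k)%N].
Proof.
elim: k z => [|k IH] z za hdeg; first by exists z; rewrite addn0 mdvd_refl.
have [i zi_lt] : exists i, (z i < a i)%N.
  have: ~~ mdvd a z by apply/negP => /mdvd_mdeg; lia.
  by case/forallPn => i; rewrite -ltnNge; exists i.
pose z' := mmul z (mvar i).
have z'a : mdvd z' a.
  apply/mdvdP => j; rewrite !ffunE; case: (eqVneq j i) => [->|_] /=.
    by rewrite addn1.
  by rewrite addn0; move/mdvdP: za.
have dz' : mdeg z' = (mdeg z + 1)%N by rewrite mdeg_mmul mdeg_mvar.
have [|y [z'y ya dy]] := IH z' z'a; first by rewrite dz'; lia.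
exists y; split => //; last by rewrite dy dz'; lia.
apply: mdvd_trans z'y; apply/mdvdP => j; rewrite ffunE; exact: leq_addr.
Qed.

Definition monomials_of_degree e : seq (mon n) :=
  [seq y <- map (fun t : {ffun 'I_n -> 'I_e.+1} => [ffun i => nat_of_ord (t i)])
               (enum {ffun 'I_n -> 'I_e.+1}) | mdeg y == e].

Lemma mem_monomials_of_degree e y : (y \in monomials_of_degree e) = (mdeg y == e).
Proof.
rewrite mem_filter; case: eqP => //= dy.
have lt_e i : (y i < e.+1)%N by rewrite ltnS -dy mdeg_coord.
apply/mapP; exists [ffun i => Ordinal (lt_e i)]; first by rewrite mem_enum.
by apply/ffunP => i; rewrite !ffunE.
Qed.

End MonomialArithmetic.

Arguments mdvd {n} a b.

Section Coefficients.
Variables (K : fieldType) (n : nat).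
Implicit Types (f : ser K n) (G M : seq (mon n)) (m : mon n).

Lemma smul_xmon f b m :
  smul f (xmon K b) m = if mdvd b m then f (mquo m b) else 0.
Proof.
rewrite /smul /xmon; case: ifP => bm; last first.
  rewrite big1 // => a /forallP ha; case: eqP => [E|]; last by rewrite mulr0.
  by move/negP: bm; case; apply/mdvdP => i; rewrite -E ffunE leq_subr.
have lt_deg i : (m i - b i < (mdeg m).+1)%N.
  by rewrite ltnS (leq_trans (leq_subr _ _) (mdeg_coord m i)).
pose a0 : {ffun 'I_n -> 'I_(mdeg m).+1} := [ffun i => Ordinal (lt_deg i)].
rewrite (bigD1 a0) /=; last by apply/forallP => i; rewrite ffunE /= leq_subr.
have -> : [ffun i => nat_of_ord (a0 i)] = mquo m b by apply/ffunP => i; rewrite !ffunE.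
have -> : [ffun i => (m i - a0 i)%N] = b.
  by apply/ffunP => i; rewrite !ffunE /=; move/mdvdP: bm => /(_ i); lia.
rewrite eqxx mulr1 big1 ?addr0 // => a /andP [/forallP ha ne].
case: eqP => [/ffunP E|]; last by rewrite mulr0.
move/negP: ne; case; apply/eqP/ffunP => i; apply: val_inj.
by move: (E i) (ha i); rewrite !ffunE /=; lia.
Qed.

Lemma lincomb_xmon (r : nat -> ser K n) M m :
  lincomb r (map (@xmon K n) M) m =
  \sum_(k < size M) (if mdvd (nth (mone n) M k) m then r k (mquo m (nth (mone n) M k)) else 0).
Proof.
rewrite /lincomb size_map; apply: eq_bigr => k _.
by rewrite (nth_map (mone n)) // smul_xmon.
Qed.

Lemma sum_at_index (j N : nat) (x : K) :
  \sum_(k < N) (if j == k then x else 0) = if (j < N)%N then x else 0.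
Proof.
under eq_bigr => k _ do rewrite eq_sym.
by rewrite -big_mkcond big_ord1_eq.
Qed.

Lemma in_mideal_support G f m : in_mideal G f -> f m != 0 -> in_monideal G m.
Proof.
move=> [r [_ ->]]; rewrite lincomb_xmon; apply: contraR => notI.
apply/eqP/big1 => k _; case: ifP => // hk; case/negP: notI.
by apply/hasP; exists (nth (mone n) G k) => //; exact: mem_nth.
Qed.

Lemma support_in_mideal G f :
  is_poly f -> (forall m, f m != 0 -> in_monideal G m) -> in_mideal G f.
Proof.
move=> [N HN] supp.
(* each monomial m of the support is attributed to its first divisor in G *)
pose r k a : K :=
  if find (mdvd^~ (mmul a (nth (mone n) G k))) G == k then f (mmul a (nth (mone n) G k)) else 0.
exists r; split.
  move=> k; exists N => a ha; rewrite /r; case: ifP => // _; apply: HN.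
  by rewrite mdeg_mmul (leq_trans ha (leq_addr _ _)).
move=> m; rewrite lincomb_xmon.
under eq_bigr => k _.
  have -> : (if mdvd (nth (mone n) G k) m then r k (mquo m (nth (mone n) G k)) else 0)
          = if find (mdvd^~ m) G == k then f m else 0.
    rewrite /r; case: ifP => hk; first by rewrite mquoK.
    case: eqP => // E; have hs : has (mdvd^~ m) G by rewrite has_find E.
    by have := nth_find (mone n) hs; rewrite E hk.
  over.
rewrite sum_at_index -has_find; case: ifP => // notI.
by apply: contraFeq notI; exact: supp.
Qed.

(* x divides m with a quotient whose degree is a multiple of c, i.e. the
   class of m is an R^(c)-multiple of the class of x *)
Definition mdvd_veronese (c : nat) (x m : mon n) : bool :=
  mdvd x m && (c %| mdeg (mquo m x))%N.

Lemma gen_sub_support G c M f m :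
  gen_sub G c (map (@xmon K n) M) f -> f m != 0 -> ~~ in_monideal G m ->
  has (mdvd_veronese c ^~ m) M.
Proof.
move=> [r [r_ver cong]] fm notI.
have fm_comb : f m = lincomb r (map (@xmon K n) M) m.
  apply/eqP; rewrite -subr_eq0; apply: contraR notI.
  exact: in_mideal_support cong.
apply: contraTT fm; rewrite fm_comb => /hasPn none; apply/negPn/eqP.
rewrite lincomb_xmon big1 // => k _; case: ifP => // hk.
have := none _ (mem_nth (mone n) (ltn_ord k)); rewrite /mdvd_veronese hk /= => ndvd.
by apply: (proj2 (r_ver k)); apply/eqP.
Qed.

Lemma support_gen_sub G c M f :
  is_poly f -> (forall m, f m != 0 -> ~~ in_monideal G m -> has (mdvd_veronese c ^~ m) M) ->
  gen_sub G c (map (@xmon K n) M) f.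
Proof.
move=> [N HN] supp.
(* each admissible monomial m is attributed to its first admissible generator *)
pose r k (a : mon n) : K :=
  if (find (mdvd_veronese c ^~ (mmul a (nth (mone n) M k))) M == k) && (c %| mdeg a)%N
  then f (mmul a (nth (mone n) M k)) else 0.
exists r; split.
  move=> k; split.
    exists N => a ha; rewrite /r; case: ifP => // _; apply: HN.
    by rewrite mdeg_mmul (leq_trans ha (leq_addr _ _)).
  by move=> a ha; rewrite /r /dvdn; case: ifP => // /andP [_ /eqP].
have comb m : lincomb r (map (@xmon K n) M) m = if has (mdvd_veronese c ^~ m) M then f m else 0.
  rewrite lincomb_xmon.
  under eq_bigr => k _.
    have -> : (if mdvd (nth (mone n) M k) m then r k (mquo m (nth (mone n) M k)) else 0)
            = if find (mdvd_veronese c ^~ m) M == k then f m else 0.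
      rewrite /r; case: ifP => hk.
        rewrite mquoK //; case: eqP => E //=.
        have hs : has (mdvd_veronese c ^~ m) M by rewrite has_find E.
        by have := nth_find (mone n) hs; rewrite E /mdvd_veronese => /andP [_ ->].
      case: eqP => // E; have hs : has (mdvd_veronese c ^~ m) M by rewrite has_find E.
      by have := nth_find (mone n) hs; rewrite E /mdvd_veronese hk.
    over.
  by rewrite sum_at_index -has_find.
apply: support_in_mideal.
  by exists N => m hm; rewrite /ssub comb HN // if_same subrr.
move=> m; rewrite /ssub comb; case: ifP => adm; first by rewrite subrr eqxx.
rewrite subr0 => fm; apply/negPn/negP => notI.
by move: (supp m fm notI); rewrite adm.
Qed.

Lemma is_poly_smul_xmon (r : ser K n) (g : mon n) : is_poly r -> is_poly (smul r (xmon K g)).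
Proof.
move=> [N HN]; exists (N + mdeg g)%N => m hm; rewrite smul_xmon; case: ifP => // hg.
by apply: HN; rewrite mdeg_mquo //; lia.
Qed.

Lemma xmon_nz (x : mon n) : xmon K x x != 0.
Proof. by rewrite /xmon eqxx oner_neq0. Qed.

End Coefficients.

Lemma nth_notin_others (T : eqType) (s : seq T) x0 i :
  uniq s -> (i < size s)%N -> nth x0 s i \notin take i s ++ drop i.+1 s.
Proof.
move=> us hi; move: us; rewrite -{1}(cat_take_drop i s) (drop_nth x0 hi).
rewrite cat_uniq /= => /and3P [_ h1 /andP [h2 _]].
rewrite mem_cat negb_or h2 andbT; apply: contra h1 => hin.
by rewrite /= hin.
Qed.

Section VeroneseGenerators.
Variables (K : fieldType) (n : nat) (G : seq (mon n)) (c u : nat).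

Definition veronese_gens : seq (mon n) :=
  undup [seq x <- monomials_of_degree n u | ~~ in_monideal G x].

Lemma mem_veronese_gens x : (x \in veronese_gens) = (mdeg x == u) && ~~ in_monideal G x.
Proof. by rewrite mem_undup mem_filter mem_monomials_of_degree andbC. Qed.

Lemma veronese_gens_generate f : in_veronese c u f -> gen_sub G c (map (@xmon K n) veronese_gens) f.
Proof.
move=> [f_poly f_ver]; apply: support_gen_sub => // m fm notI.
have deg_m : (mdeg m %% c = u)%N.
  by apply/eqP; apply: contraR fm => /eqP /f_ver ->.
have [|z [_ zm dz]] := mdvd_intermediate (k := u) (mone_dvd m).
  by rewrite mdeg_mone -{1}deg_m leq_mod.
rewrite mdeg_mone in dz.
apply/hasP; exists z.
  by rewrite mem_veronese_gens dz eqxx; apply: contra notI; exact: in_monideal_dvd.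
rewrite /mdvd_veronese zm mdeg_mquo // dz /= /dvdn.
by rewrite {1}(divn_eq (mdeg m) c) deg_m addnK modnMl.
Qed.

(* no generator is a Veronese multiple of another one: they all have degree u *)
Lemma veronese_gens_irredundant i : (i < size veronese_gens)%N ->
  ~ gen_sub G c (map (@xmon K n) (take i veronese_gens ++ drop i.+1 veronese_gens))
               (xmon K (nth (mone n) veronese_gens i)).
Proof.
move=> hi sub; set x := nth (mone n) veronese_gens i in sub.
have := mem_nth (mone n) hi; rewrite -/x mem_veronese_gens => /andP [/eqP dx notI].
case/hasP: (gen_sub_support sub (xmon_nz K x) notI) => y yin /andP [yx _].
have: y \in veronese_gens by move: yin; rewrite mem_cat => /orP [/mem_take | /mem_drop].
rewrite mem_veronese_gens => /andP [/eqP dy _].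
have y_eq : y = x by apply: mdvd_mdeg_eq yx _; rewrite dx dy.
by move: (nth_notin_others (mone n) (undup_uniq _) hi); rewrite -/x -y_eq yin.
Qed.

Lemma veronese_gens_min : min_gens G c u (map (@xmon K n) veronese_gens).
Proof.
split.
- move=> k; rewrite size_map => hk; exists 0%N; rewrite (nth_map (mone n)) //.
  have := mem_nth (mone n) hk; rewrite mem_veronese_gens => /andP [/eqP dk _].
  split; last by move=> m; rewrite mul0n addn0 /xmon; case: eqP => // ->.
  exists (mdeg (nth (mone n) veronese_gens k)) => m hm; rewrite /xmon.
  by case: eqP => // E; move: hm; rewrite E ltnn.
- exact: veronese_gens_generate.
- move=> i; rewrite size_map => hi.
  rewrite -map_take -map_drop -map_cat (nth_map (mone n)) //.
  exact: veronese_gens_irredundant.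
Qed.

End VeroneseGenerators.

Section ColonIdeals.
Variables (K : fieldType) (n d c u : nat) (G : seq (mon n)).
Hypothesis G_deg : forall h, h \in G -> (mdeg h <= d)%N.
Hypothesis c_ge : (d.-1 <= c)%N.
Hypothesis u_le : (u <= c)%N.

(* g is the next generator and prev lists the earlier ones, all monomials
   of degree u outside I *)
Variables (prev : seq (mon n)) (g : mon n).
Hypothesis prev_gens : forall x, x \in prev -> mdeg x = u /\ ~~ in_monideal G x.
Hypothesis g_deg : mdeg g = u.
Hypothesis g_notI : ~~ in_monideal G g.
Hypothesis g_new : g \notin prev.

Definition in_J (m : mon n) : bool := in_monideal G m || has (mdvd^~ m) prev.

Definition colon_gens : seq (mon n) :=
  [seq y <- monomials_of_degree n c | ~~ in_monideal G y && in_J (mmul y g)].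

Lemma in_J_dvd a b : mdvd a b -> in_J a -> in_J b.
Proof.
move=> ab /orP [aI | /hasP [x xp xa]]; first by rewrite /in_J (in_monideal_dvd ab aI).
by apply/orP; right; apply/hasP; exists x => //; exact: mdvd_trans ab.
Qed.

Lemma g_notin_J : ~~ in_J g.
Proof.
rewrite /in_J (negbTE g_notI) /=; apply/hasP => -[x xp xg].
have [dx _] := prev_gens xp.
have x_eq : x = g by apply: mdvd_mdeg_eq xg _; rewrite dx g_deg.
by move/negP: g_new; rewrite -x_eq.
Qed.

(* the only use of c >= d - 1: membership of a g in J is witnessed by a
   divisor of a of degree at most c *)
Lemma colon_small_witness a : ~~ in_monideal G a -> in_J (mmul a g) ->
  exists z, [/\ mdvd z a, (mdeg z <= c)%N & in_J (mmul z g)].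
Proof.
move=> notI ag_J.
have quo_witness h : mdvd h (mmul a g) -> mdvd (mquo h g) a /\ mdvd h (mmul (mquo h g) g).
  by rewrite -!mdvd_quo_mul mdvd_refl.
case/orP: ag_J => [/hasP [h hG hag] | /hasP [x xp xag]].
- have [za hz] := quo_witness h hag.
  exists (mquo h g); split => //; last by rewrite /in_J; apply/orP; left; apply/hasP; exists h.
  have := mdvd_mdeg (mquo_dvd h g); have := G_deg hG.
  case: (ltnP c (mdeg (mquo h g))) => // c_lt dh dq.
  have quo_eq : mquo h g = h by apply: mdvd_mdeg_eq (mquo_dvd h g) _; lia.
  by case/negP: notI; apply/hasP; exists h; rewrite // -quo_eq.
- have [za hz] := quo_witness x xag.
  exists (mquo x g); split => //; last by apply/orP; right; apply/hasP; exists x.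
  have [dx _] := prev_gens xp.
  by rewrite (leq_trans (mdvd_mdeg (mquo_dvd x g))) // dx.
Qed.

Lemma colon_support_in_J r a :
  colon G c (map (@xmon K n) prev) (xmon K g) r -> r a != 0 -> in_J (mmul a g).
Proof.
move=> [_ sub] ra; case: (boolP (in_monideal G (mmul a g))) => [agI | ag_notI].
  by rewrite /in_J agI.
have := gen_sub_support sub _ ag_notI; rewrite smul_xmon mmul_dvdl mmulK.
by case/(_ ra)/hasP => x xp /andP [xag _]; apply/orP; right; apply/hasP; exists x.
Qed.

Lemma colon_sub_ideal_gen r :
  colon G c (map (@xmon K n) prev) (xmon K g) r -> ideal_gen G c colon_gens r.
Proof.
move=> col; have [[r_poly r_ver] _] := col.
split => //; apply: support_gen_sub => // a ra notI.
have c_dvd_a : (c %| mdeg a)%N by rewrite /dvdn; apply: contraR ra => /eqP /r_ver ->.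
have [z [za zc zJ]] := colon_small_witness notI (colon_support_in_J col ra).
have c_le_a : (c <= mdeg a)%N.
  case: (posnP (mdeg a)) => [/mdeg_eq0 a1 | a_pos]; last exact: dvdn_leq.
  have z1 : z = mone n by apply: mdeg_eq0; move: (mdvd_mdeg za); rewrite a1 mdeg_mone; lia.
  have zg : mmul z g = g by apply/ffunP => j; rewrite z1 !ffunE.
  by move: zJ; rewrite zg (negbTE g_notin_J).
have [|y [zy ya dy]] := mdvd_intermediate (k := c - mdeg z) za; first by rewrite subnKC.
rewrite subnKC // in dy.
apply/hasP; exists y.
  rewrite mem_filter mem_monomials_of_degree dy eqxx andbT.
  rewrite (in_J_dvd (mmul_dvd2r g zy) zJ) andbT.
  by apply: contra notI; exact: in_monideal_dvd.
by rewrite /mdvd_veronese ya mdeg_mquo // dy dvdn_sub.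
Qed.

Lemma ideal_gen_sub_colon r :
  ideal_gen G c colon_gens r -> colon G c (map (@xmon K n) prev) (xmon K g) r.
Proof.
move=> [[r_poly r_ver] sub]; split => //.
apply: support_gen_sub; first exact: is_poly_smul_xmon.
move=> m; rewrite smul_xmon; case: ifP => gm; last by rewrite eqxx.
set a := mquo m g => ra notI.
have a_notI : ~~ in_monideal G a by apply: contra notI; exact: in_monideal_dvd (mquo_dvd m g).
have c_dvd_a : (c %| mdeg a)%N by rewrite /dvdn; apply: contraR ra => /eqP /r_ver ->.
case/hasP: (gen_sub_support sub ra a_notI) => y.
rewrite mem_filter => /andP [/andP [_ yJ] _] /andP [ya _].
have ygm : mdvd (mmul y g) m by rewrite -mdvd_mul_quo.
case/orP: (in_J_dvd ygm yJ) => [mI | /hasP [x xp xm]]; first by rewrite mI in notI.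
apply/hasP; exists x => //.
have dm : mdeg m = (mdeg a + u)%N by rewrite -{1}(mquoK gm) mdeg_mmul g_deg.
by rewrite /mdvd_veronese xm mdeg_mquo // (proj1 (prev_gens xp)) dm addnK.
Qed.

Lemma colon_in_filtration : in_filtration G c (colon G c (map (@xmon K n) prev) (xmon K g)).
Proof.
exists colon_gens; split.
  move=> y; rewrite mem_filter mem_monomials_of_degree => /andP [/andP [notI _] /eqP dy].
  split => // yI; move/negP: notI; apply; exact: in_mideal_support yI (xmon_nz K y).
move=> r _; split; [exact: colon_sub_ideal_gen | exact: ideal_gen_sub_colon].
Qed.

End ColonIdeals.

Theorem proposition3p18 (K : fieldType) (n d c : nat) (G : seq (mon n))
  (HG : forall g, g \in G -> (mdeg g <= d)%N)
  (Hc1 : (1 <= c)%N) (Hcd : (d.-1 <= c)%N) (u : nat) (Hu : (u < c)%N) :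
  veronese_linear_quotients K G c u.
Proof.
set M := veronese_gens G u.
exists (map (@xmon K n) M); split; first exact: veronese_gens_min.
move=> i; rewrite size_map => hi.
rewrite -map_take (nth_map (mone n)) //.
have gen_props x : x \in M -> mdeg x = u /\ ~~ in_monideal G x.
  by rewrite mem_veronese_gens => /andP [/eqP].
have [dg g_notI] := gen_props _ (mem_nth (mone n) hi).
apply: (colon_in_filtration K HG Hcd (ltnW Hu) _ dg g_notI).
- by move=> x /mem_take; exact: gen_props.
- apply: contra (nth_notin_others (mone n) (undup_uniq _) hi) => hin.
  by rewrite mem_cat hin.
Qed.
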